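(* Let $(\mathbf{X},\mathbf{p})$ be a $\{1,k\}$-payment equilibrium. If some agent $i$ is pEF1 towards another agent $j$ but is not $(2-1/k)$-pEFX towards $j$, then $p(X_j)<k$.
   Context: Fix $k>1$. Agents $N$, chores $M$, additive costs $c_i(e)\in\{1,k\}$. An allocation $\mathbf{X}$ partitions $M$ into bundles $X_i$. A payment vector assigns $p(e)>0$, $p(X)=\sum_{e\in X}p(e)$; $\alpha_{i,e}=c_i(e)/p(e)$, $\alpha_i=\min_e\alpha_{i,e}$, $\mathsf{MPB}_i=\{e:\alpha_{i,e}=\alpha_i\}$; $(\mathbf{X},\mathbf{p})$ is a $\{1,k\}$-payment equilibrium if $X_i\subseteq\mathsf{MPB}_i$ for all $i$ and $p(e)\in\{1,k\}$ for all $e$. Agent $i$ is pEF1 towards $j$ if $X_i=\emptyset$ or there is $e\in X_i$ with $p(X_i\setminus\{e\})\le p(X_j)$; $i$ is $\beta$-pEFX towards $j$ if $X_i=\emptyset$ or $p(X_i\setminus\{e\})\le\beta\,p(X_j)$ for all $e\in X_i$. *)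

From mathcomp Require Import all_boot all_order all_algebra.
Set Implicit Arguments. Unset Strict Implicit. Unset Printing Implicit Defensive.
Import Order.TTheory GRing.Theory Num.Theory.
Local Open Scope ring_scope.

Section Fair.
Variables (R : realFieldType) (agent chore : finType).

(* An allocation partitioning M among agents: each chore is assigned to one agent. *)
Definition bundle (X : chore -> agent) (i : agent) : {set chore} :=
  [set e | X e == i].

Definition pay (p : chore -> R) (S : {set chore}) : R := \sum_(e in S) p e.

Definition alpha (c : agent -> chore -> R) (p : chore -> R) (i : agent) (e : chore) : R :=
  c i e / p e.

Definition MPB (c : agent -> chore -> R) (p : chore -> R) (i : agent) (e : chore) : Prop :=
  forall e' : chore, alpha c p i e <= alpha c p i e'.

Definition pay_equilibrium_1k (k : R) (c : agent -> chore -> R)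
    (X : chore -> agent) (p : chore -> R) : Prop :=
  (forall e, 0 < p e) /\
  (forall i e, e \in bundle X i -> MPB c p i e) /\
  (forall e, p e = 1 \/ p e = k).

Definition pEF1 (X : chore -> agent) (p : chore -> R) (i j : agent) : Prop :=
  bundle X i = set0 \/
  exists2 e, e \in bundle X i & pay p (bundle X i :\ e) <= pay p (bundle X j).

Definition beta_pEFX (beta : R) (X : chore -> agent) (p : chore -> R) (i j : agent) : Prop :=
  bundle X i = set0 \/
  forall e, e \in bundle X i -> pay p (bundle X i :\ e) <= beta * pay p (bundle X j).

End Fair.

(* If removing some chore e brings p(X_i) down to at most p(X_j), then removing any
   other chore e' leaves at most p(X_j) + p(e) - p(e') <= p(X_j) + (k - 1), since all
   payments lie in [1, k].  Once p(X_j) >= k this slack is absorbed by the factor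
   2 - 1/k, because (2 - 1/k) p(X_j) - p(X_j) - (k - 1) = (k - 1)(p(X_j) - k)/k. *)
From mathcomp Require Import all_boot all_order all_algebra.
From mathcomp Require Import ring lra.
Set Implicit Arguments. Unset Strict Implicit. Unset Printing Implicit Defensive.
Import Order.TTheory GRing.Theory Num.Theory.
Local Open Scope ring_scope.

Section PaymentBounds.
Variables (R : realFieldType) (agent chore : finType) (p : chore -> R).

Lemma pay_setD1 (S : {set chore}) (e : chore) :
  e \in S -> pay p S = p e + pay p (S :\ e).
Proof.
move=> eS; rewrite /pay (bigD1 e eS) /=; congr (_ + _).
by apply: eq_bigl => x; rewrite in_setD1 andbC.
Qed.

Lemma pay_setD1_exchange (S : {set chore}) (e e' : chore) :
  e \in S -> e' \in S -> pay p (S :\ e') = pay p (S :\ e) + p e - p e'.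
Proof.
move=> eS e'S; have := pay_setD1 eS; rewrite (pay_setD1 e'S); lra.
Qed.

Lemma pEFX_factor_absorbs_slack (k P : R) :
  1 <= k -> k <= P -> P + (k - 1) <= (2 - k^-1) * P.
Proof.
move=> k_ge1 kP; rewrite -subr_ge0.
have -> : (2 - k^-1) * P - (P + (k - 1)) = (k - 1) * ((P - k) / k).
  by field; apply/eqP => k0; lra.
by apply: mulr_ge0; [lra | apply: divr_ge0; lra].
Qed.

Lemma pEF1_pEFX (k : R) (X : chore -> agent) (i j : agent) :
  (forall e, 1 <= p e <= k) -> k <= pay p (bundle X j) ->
  pEF1 X p i j -> beta_pEFX (2 - k^-1) X p i j.
Proof.
move=> p_bnd kPj [Xi0 | [e eXi le_ej]]; first by left.
right=> e' e'Xi; rewrite (pay_setD1_exchange eXi e'Xi).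
have /andP[pe_ge pe_le] := p_bnd e; have /andP[pe'_ge _] := p_bnd e'.
have k_ge1 : 1 <= k by lra.
have := pEFX_factor_absorbs_slack k_ge1 kPj; lra.
Qed.

End PaymentBounds.

Theorem lemma7 (R : realFieldType) (agent chore : finType) (k : R)
    (c : agent -> chore -> R) (X : chore -> agent) (p : chore -> R) (i j : agent) :
  1 < k ->
  (forall a e, c a e = 1 \/ c a e = k) ->
  pay_equilibrium_1k k c X p ->
  i != j ->
  pEF1 X p i j ->
  ~ beta_pEFX (2 - k^-1) X p i j ->
  pay p (bundle X j) < k.
Proof.
move=> k_gt1 _ [_ [_ p1k]] _ ef1 not_efx; rewrite ltNge; apply/negP => kPj.
apply/not_efx/(pEF1_pEFX _ kPj ef1) => e.
by case: (p1k e) => ->; apply/andP; split; lra.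
Qed.
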